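(* Let $\mathsf{M}$ be the subspace of $\ell_1$ with underlying set $\{x \in \prod_{i\in\mathbb{N}} M_i : \sum_{i} |x(i)| < \infty\}$, where $M_i = \{ j\cdot 2^{-i} \mid j \in \{0,\dots,2^i\}\}$. Let $(x_n)_n$ be a sequence in $\mathsf{M}$ and $x_\infty\in\mathsf{M}$. Then $(x_n)_n$ converges in $\mathsf{M}$ to $x_\infty$ if and only if both of the following hold: (a) for every $i\in\mathbb{N}$ there is $n_i\in\mathbb{N}$ with $x_n(i)=x_\infty(i)$ for all $n\ge n_i$; (b) the sequence $(\|x_n\|_1)_n$ converges to $\|x_\infty\|_1$ in $\mathbb{R}$.
   Context: $\ell_1$ is the set of real sequences $x$ with $\|x\|_1=\sum_{i}|x(i)|<\infty$, topologised by the metric $\|x-y\|_1$; $\mathsf{M}$ carries the subspace topology. *)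

From HB Require Import structures.
From mathcomp Require Import all_boot all_order all_algebra.
From mathcomp Require Import all_classical all_reals all_analysis.
Set Implicit Arguments. Unset Strict Implicit. Unset Printing Implicit Defensive.
Import Order.TTheory GRing.Theory Num.Theory numFieldNormedType.Exports.
Local Open Scope ring_scope.
Local Open Scope classical_set_scope.

Definition in_l1 {R : realType} (x : nat -> R) : Prop :=
  cvgn (series (fun i => `|x i|)).

Definition l1norm {R : realType} (x : nat -> R) : R :=
  limn (series (fun i => `|x i|)).

Definition Mi {R : realType} (i : nat) : set R :=
  [set r | exists2 j : nat, (j <= 2 ^ i)%N & r = j%:R / 2%:R ^+ i].

Definition inM {R : realType} (x : nat -> R) : Prop :=
  (forall i, Mi i (x i)) /\ in_l1 x.

(* convergence in M (subspace topology of the metric ||x - y||_1) *)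
Definition conv_in_M {R : realType} (xs : nat -> nat -> R) (xinf : nat -> R) : Prop :=
  (fun n => l1norm (fun i => xs n i - xinf i)) @ \oo --> (0:R)%R.

From HB Require Import structures.
From mathcomp Require Import all_boot all_order all_algebra.
From mathcomp Require Import all_classical all_reals all_analysis.
From mathcomp Require Import lra.
Import Order.TTheory GRing.Theory Num.Theory numFieldNormedType.Exports.
Local Open Scope ring_scope.
Local Open Scope classical_set_scope.

(* Convergence in l_1 gives convergence of the norms and of every coordinate;
   since the i-th coordinates live in the discrete grid M_i, coordinatewise
   convergence means eventual equality.  Conversely, if x_n agrees with x_oo on
   the first N coordinates, then ||x_n - x_oo||_1 is at most
   (||x_n||_1 - ||x_oo||_1) + 2 (tail of x_oo beyond N), which is small once N
   and then n are large. *)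

Section l1_space.
Context {R : realType}.
Implicit Types x y : nat -> R.

Lemma series_norm_le_l1norm {x} n : in_l1 x -> series (fun i => `|x i|) n <= l1norm x.
Proof.
move=> l1x; apply: nondecreasing_cvgn_le => //.
by apply: nondecreasing_series => i _ _; exact: normr_ge0.
Qed.

Lemma l1norm_ge0 {x} : in_l1 x -> 0 <= l1norm x.
Proof.
move=> l1x; apply: le_trans _ (series_norm_le_l1norm 0 l1x).
by rewrite /series /= big_geq.
Qed.

Lemma normr_le_l1norm {x} i : in_l1 x -> `|x i| <= l1norm x.
Proof.
move=> l1x; apply: le_trans _ (series_norm_le_l1norm i.+1 l1x).
by rewrite seriesSr lerDr sumr_ge0.
Qed.

Lemma in_l1_sub {x y} : in_l1 x -> in_l1 y -> in_l1 (fun i => x i - y i).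
Proof.
move=> l1x l1y; apply: (@series_le_cvg _ _ (fun i => `|x i| + `|y i|)) => //.
  by move=> i; exact: ler_normB.
exact: is_cvg_seriesD.
Qed.

Lemma l1norm_subC x y : l1norm (fun i => x i - y i) = l1norm (fun i => y i - x i).
Proof. by congr (limn (series _)); apply: funext => i; exact: distrC. Qed.

Lemma l1norm_le_subD {x y} : in_l1 x -> in_l1 y ->
  l1norm x <= l1norm (fun i => x i - y i) + l1norm y.
Proof.
move=> l1x l1y; rewrite /l1norm -lim_seriesD //; last exact: in_l1_sub.
apply: lim_series_le => //; first by apply: is_cvg_seriesD => //; exact: in_l1_sub.
by move=> i; rewrite -[x i in leLHS](subrK (y i)) ler_normD.
Qed.

Lemma dist_l1norm_le {x y} : in_l1 x -> in_l1 y ->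
  `|l1norm x - l1norm y| <= l1norm (fun i => x i - y i).
Proof.
move=> l1x l1y; have := l1norm_le_subD l1x l1y; have := l1norm_le_subD l1y l1x.
by rewrite -l1norm_subC ler_norml; lra.
Qed.

Lemma l1norm_sub_le_tail {x y N} : in_l1 x -> in_l1 y ->
    (forall i, (i < N)%N -> x i = y i) ->
  l1norm (fun i => x i - y i)
    <= l1norm x - l1norm y + 2 * (l1norm y - series (fun i => `|y i|) N).
Proof.
move=> l1x l1y eq_xy; apply: limr_le; first exact: in_l1_sub.
near=> K; have NK : (N <= K)%N by near: K; exact: nbhs_infty_ge.
have head_eq : series (fun i => `|x i|) N = series (fun i => `|y i|) N.
  by apply: eq_big_nat => i /andP[_ /eq_xy ->].
have head_diff0 : series (fun i => `|x i - y i|) N = 0.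
  by rewrite /series /= big_nat_cond big1 // => i /andP[/andP[_ /eq_xy ->] _];
     rewrite subrr normr0.
have tail_diff : series (fun i => `|x i - y i|) K
    <= (series (fun i => `|x i|) K - series (fun i => `|x i|) N)
     + (series (fun i => `|y i|) K - series (fun i => `|y i|) N).
  rewrite -[series _ K](subr0) -{1}head_diff0 !sub_series_geq // -big_split /=.
  by apply: ler_sum => i _; exact: ler_normB.
have := series_norm_le_l1norm K l1x; have := series_norm_le_l1norm K l1y.
by move: tail_diff; rewrite head_eq /=; lra.
Unshelve. all: by end_near. Qed.

Section sequences.
Context {xs : nat -> nat -> R} {x : nat -> R}.
Hypotheses (l1_xs : forall n, in_l1 (xs n)) (l1_x : in_l1 x).

Let dist0_l1norm_sub n :
  `|0 - l1norm (fun i => xs n i - x i)| = l1norm (fun i => xs n i - x i).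
Proof. by rewrite sub0r normrN ger0_norm // l1norm_ge0 //; exact: in_l1_sub. Qed.

Lemma cvg_l1norm :
  (fun n => l1norm (fun i => xs n i - x i)) @ \oo --> 0 ->
  (fun n => l1norm (xs n)) @ \oo --> l1norm x.
Proof.
move=> /cvgrPdist_lt cvg_xs; apply/cvgrPdist_lt => e /cvg_xs.
apply: filterS => n; rewrite dist0_l1norm_sub distrC; apply: le_lt_trans.
exact: dist_l1norm_le.
Qed.

Lemma cvg_l1_coord i :
  (fun n => l1norm (fun i => xs n i - x i)) @ \oo --> 0 -> xs ^~ i @ \oo --> x i.
Proof.
move=> /cvgrPdist_lt cvg_xs; apply/cvgrPdist_lt => e /cvg_xs.
apply: filterS => n; rewrite dist0_l1norm_sub distrC; apply: le_lt_trans.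
exact: (normr_le_l1norm i (in_l1_sub _ _)).
Qed.

Lemma l1_cvg_of_coord_l1norm :
    (forall i, \forall n \near \oo, xs n i = x i) ->
    (fun n => l1norm (xs n)) @ \oo --> l1norm x ->
  (fun n => l1norm (fun i => xs n i - x i)) @ \oo --> 0.
Proof.
move=> coord_eq /cvgrPdist_lt cvg_norm; apply/cvgrPdist_lt => e e0.
have e3_gt0 : 0 < e / 3 by rewrite divr_gt0.
have [N _ /(_ N (leqnn N)) tailN] := proj1 (cvgrPdist_lt _ _) l1_x _ e3_gt0.
have head_eq : \forall n \near \oo, forall i, (i < N)%N -> xs n i = x i.
  apply: filterS (@filter_forall _ 'I_N (fun i n => xs n i = x i) _ _ (fun i => coord_eq i)).
  by move=> n eq_n i ltiN; exact: (eq_n (Ordinal ltiN)).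
near=> n; rewrite dist0_l1norm_sub.
have norm_close : `|l1norm x - l1norm (xs n)| < e / 3 by near: n; exact: cvg_norm.
have eq_below : forall i, (i < N)%N -> xs n i = x i by near: n.
apply: le_lt_trans (l1norm_sub_le_tail (l1_xs n) l1_x eq_below) _.
move: tailN norm_close; rewrite /l1norm !ltr_norml => /andP[_ tailN] /andP[norm_close _].
lra.
Unshelve. all: by end_near. Qed.

End sequences.
End l1_space.

Lemma dist_natr_lt1_eq (R : numDomainType) (j k : nat) :
  `|j%:R - k%:R : R| < 1 -> j = k.
Proof.
rewrite -[j%:R]/((j : int)%:~R) -[k%:R]/((k : int)%:~R) -intrB -intr_norm.
by rewrite -[1]/(1%:~R) ltr_int -[1%R]add0r ltzD1 normr_le0 subr_eq0 => /eqP[].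
Qed.

Lemma Mi_dist_lt_eq (R : realType) i (a b : R) :
  Mi i a -> Mi i b -> `|a - b| < (2 ^+ i)^-1 -> a = b.
Proof.
move=> [j _ ->] [k _ ->].
have inv_gt0 : 0 < ((2 : R) ^+ i)^-1 by rewrite invr_gt0 exprn_gt0.
by rewrite -mulrBl normrM [`|_^-1|]gtr0_norm // gtr_pMl // => /dist_natr_lt1_eq ->.
Qed.

Lemma Mi_cvg_eventually_eq {R : realType} {i} {u : nat -> R} {a : R} :
  (forall n, Mi i (u n)) -> Mi i a -> u @ \oo --> a -> \forall n \near \oo, u n = a.
Proof.
move=> Mu Ma /cvgrPdist_lt/(_ ((2 ^+ i)^-1)); rewrite invr_gt0 exprn_gt0 // => /(_ isT).
by apply: filterS => n; rewrite distrC; exact: Mi_dist_lt_eq.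
Qed.

Theorem lemma3p1 (R : realType) (xs : nat -> nat -> R) (xinf : nat -> R)
  (hxs : forall n, inM (xs n)) (hxinf : inM xinf) :
  conv_in_M xs xinf <->
  ((forall i : nat, exists ni : nat, forall n : nat, (ni <= n)%N -> xs n i = xinf i) /\
   (fun n => l1norm (xs n)) @ \oo --> l1norm xinf).
Proof.
have l1_xs n := (hxs n).2; have l1_x := hxinf.2.
split=> [cvg_xs | [coord_eq cvg_norm]].
  split; last exact: cvg_l1norm.
  move=> i; have cvg_i := cvg_l1_coord l1_xs l1_x i cvg_xs.
  have [ni _ eq_ni] := Mi_cvg_eventually_eq (fun n => (hxs n).1 i) (hxinf.1 i) cvg_i.
  by exists ni.
apply: l1_cvg_of_coord_l1norm => // i.
by have [ni eq_ni] := coord_eq i; exists ni.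
Qed.
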